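(* Let $n\ge 1$, let $G=P_n$ be the path with vertex set $\{1,\dots,n\}$ and edges $\{i,i+1\}$ for $1\le i<n$, and let $C\subseteq V(G)$ be such that no vertex of $V(G)\setminus C$ is isolated. If $C$ is a good configuration for $G$, then $\gamma_{\rm gr}(G;C)=n$; otherwise $\gamma_{\rm gr}(G;C)=n-1$.
   Context: $N\langle v\rangle = N[v]$ (closed neighborhood) if $v\in C$ and $N\langle v\rangle=N(v)$ (open neighborhood) if $v\notin C$. A sequence $(v_1,\dots,v_k)$ of distinct vertices is legal if $N\langle v_i\rangle\setminus\bigcup_{j<i}N\langle v_j\rangle\neq\emptyset$ for all $i\ge 2$, and dominating if $\bigcup_j N\langle v_j\rangle=V$; $\gamma_{\rm gr}(G;C)$ is the maximum length of a legal dominating sequence. Good configuration (defined for a path with vertices $a_1,\dots,a_n$ in order, applied to $C\cap\{a_1,\dots,a_n\}$; isolated vertices outside $C$ are allowed in this definition): $C$ is a good configuration for the path if (i) $n=1$ and $a_1\in C$; or (ii) $n=2$ and $\{a_1,a_2\}\not\subseteq C$; or (iii) $n\ge 3$ and either $a_1\notin C$ and $C$ is a good configuration for the subpath $(a_3,\dots,a_n)$, or $a_n\notin C$ and $C$ is a good configuration for the subpath $(a_1,\dots,a_{n-2})$. *)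

From mathcomp Require Import all_boot.
Set Implicit Arguments. Unset Strict Implicit. Unset Printing Implicit Defensive.

Section Grundy.
Variables (T : finType) (adj : rel T) (C : {set T}).

Definition Nopen (v : T) : {set T} := [set u | adj v u].
Definition Nclosed (v : T) : {set T} := v |: Nopen v.

Definition Nang (v : T) : {set T} := if v \in C then Nclosed v else Nopen v.

Definition legal (s : seq T) : bool :=
  uniq s &&
  [forall i : 'I_(size s), (0 < i) ==>
     ~~ (Nang (tnth (in_tuple s) i) \subset \bigcup_(u <- take i s) Nang u)].

Definition dominating (s : seq T) : bool :=
  \bigcup_(u <- s) Nang u == [set: T].

(* gamma_gr(G;C): maximum length of a legal dominating sequence
   (0 if there is none; sequences of distinct vertices have length <= #|T|) *)
Definition gamma_gr : nat :=
  \max_(k < #|T|.+1 | [exists s : k.-tuple T, legal s && dominating s]) k.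

End Grundy.

(* The path P_n on vertices 'I_n = {0,...,n-1} (vertex i stands for i+1). *)
Definition path_adj (n : nat) : rel 'I_n :=
  fun i j => (i.+1 == j :> nat) || (j.+1 == i :> nat).

(* Good configuration for a path given by its vertex sequence a_1 ... a_n *)
Inductive good {T : finType} (C : {set T}) : seq T -> Prop :=
  | good1 a : a \in C -> good C [:: a]
  | good2 a b : ~~ ((a \in C) && (b \in C)) -> good C [:: a; b]
  | goodL a b t : 0 < size t -> a \notin C -> good C t -> good C [:: a, b & t]
  | goodR t a b : 0 < size t -> b \notin C -> good C t -> good C (t ++ [:: a; b]).

From mathcomp Require Import all_boot zify.
Set Implicit Arguments. Unset Strict Implicit. Unset Printing Implicit Defensive.

(* Choosing, in a legal sequence that uses all n vertices of the path, a vertex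
   f v footprinted by each v gives a permutation f moving every vertex by at
   most one, i.e. a product of disjoint swaps of adjacent vertices.  A fixed
   point of f lies in C, and in a swapped pair the vertex placed first is not
   in C.  Since footprints are new, the block following a fixed point or a
   pair placed right vertex first is again a pair placed right vertex first.
   So the path is tiled by pairs placed left vertex first, at most one other
   block, then pairs placed right vertex first: C is good.  Conversely a good
   configuration is peeled into a legal ordering of all vertices (the outer
   vertex not in C first, its partner last), and the first n-1 vertices in
   order are legal, and dominating unless n = 2 and a_1 is not in C, in which
   case C is good. *)

Section PathNeighbourhood.
(* Vertex i of the path is the natural number i and [c] is membership in C. *)
Variable c : nat -> bool.

Definition path_nbhd (u x : nat) : bool :=
  (u.+1 == x) || (x.+1 == u) || ((u == x) && c u).

Lemma path_nbhdP u x : path_nbhd u x -> [\/ x = u.+1, u = x.+1 | u = x /\ c u].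
Proof.
by case/orP => [/orP[/eqP<-|/eqP->]|/andP[/eqP-> cx]]; [apply: Or31|apply: Or32|apply: Or33].
Qed.

Lemma path_nbhd_far u x : u.+1 < x \/ x.+1 < u -> ~~ path_nbhd u x.
Proof. by move=> far; apply/negP => /path_nbhdP[]; lia. Qed.

Lemma path_nbhd_succ u : path_nbhd u u.+1.
Proof. by rewrite /path_nbhd eqxx. Qed.

Lemma path_nbhd_pred u : path_nbhd u.+1 u.
Proof. by rewrite /path_nbhd eqxx orbT. Qed.

Lemma path_nbhd_self u : path_nbhd u u = c u.
Proof. by rewrite /path_nbhd eqxx !gtn_eqF. Qed.

Definition undominated (prev : seq nat) (y : nat) : bool :=
  all (fun u => ~~ path_nbhd u y) prev.

Definition has_footprint (lo hi : nat) (prev : seq nat) (v : nat) : bool :=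
  has (fun y => path_nbhd v y && undominated prev y) (iota lo (hi - lo)).

Fixpoint legal_from (lo hi : nat) (prev s : seq nat) : bool :=
  if s is v :: s' then has_footprint lo hi prev v && legal_from lo hi (rcons prev v) s'
  else true.

Lemma legal_from_cat lo hi prev s1 s2 :
  legal_from lo hi prev (s1 ++ s2) =
  legal_from lo hi prev s1 && legal_from lo hi (prev ++ s1) s2.
Proof.
elim: s1 prev => [|v s1 IH] prev /=; first by rewrite cats0.
by rewrite IH -cats1 -catA andbA.
Qed.

Lemma legal_from_widen lo hi lo' hi' extra prev s :
  lo <= lo' -> hi' <= hi ->
  (forall u y, u \in extra -> lo' <= y < hi' -> ~~ path_nbhd u y) ->
  legal_from lo' hi' prev s -> legal_from lo hi (extra ++ prev) s.
Proof.
move=> le_lo le_hi far_extra; elim: s prev => [|v s IH] prev //=.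
case/andP=> /hasP[y]; rewrite mem_iota => y_in /andP[vy fresh_y] legal_s.
rewrite rcons_cat IH // andbT; apply/hasP; exists y; first by rewrite mem_iota; lia.
move: fresh_y; rewrite vy /undominated all_cat => ->; rewrite andbT.
by apply/allP => u u_in; apply: far_extra => //; lia.
Qed.

Lemma legal_from_iota n a b : a + b < n -> legal_from 0 n (iota 0 a) (iota a b).
Proof.
elim: b a => [|b IH] a lt_ab //=; apply/andP; split.
  apply/hasP; exists a.+1; first by rewrite mem_iota subn0; lia.
  rewrite path_nbhd_succ; apply/allP => u; rewrite mem_iota => u_lt.
  by apply: path_nbhd_far; lia.
have -> : rcons (iota 0 a) a = iota 0 a.+1 by rewrite -cats1 -addn1 iotaD.
by apply: IH; lia.
Qed.

Lemma legal_from_nth lo hi prev s i : legal_from lo hi prev s -> i < size s ->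
  has_footprint lo hi (prev ++ take i s) (nth 0 s i).
Proof.
elim: s prev i => [|v s IH] prev [|i] //= /andP[fp legal_s] lt_i.
  by rewrite cats0.
by rewrite -cat_rcons; apply: IH.
Qed.

Inductive goodn : seq nat -> Prop :=
  | goodn1 a : c a -> goodn [:: a]
  | goodn2 a b : ~~ (c a && c b) -> goodn [:: a; b]
  | goodnL a b t : 0 < size t -> ~~ c a -> goodn t -> goodn [:: a, b & t]
  | goodnR t a b : 0 < size t -> ~~ c b -> goodn t -> goodn (t ++ [:: a; b]).

Lemma legal_from_wrap lo hi lo' hi' a b s :
  ~~ c a -> b = a.+1 \/ a = b.+1 -> lo <= a < hi -> lo <= b < hi ->
  lo <= lo' -> hi' <= hi -> (forall y, lo' <= y < hi' -> a.+1 < y \/ y.+1 < a) ->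
  {subset s <= iota lo' (hi' - lo')} ->
  legal_from lo' hi' [::] s -> legal_from lo hi [::] (a :: s ++ [:: b]).
Proof.
move=> a_notin ab a_in b_in le_lo le_hi far_a s_in legal_s.
have nbhd_ab : path_nbhd a b by case: ab => ->; rewrite ?path_nbhd_succ ?path_nbhd_pred.
have nbhd_ba : path_nbhd b a by case: ab => ->; rewrite ?path_nbhd_succ ?path_nbhd_pred.
rewrite /= legal_from_cat /= andbT; apply/and3P; split.
- by apply/hasP; exists b; rewrite ?mem_iota ?nbhd_ab //; lia.
- apply: (legal_from_widen (extra := [:: a]) _ _ _ legal_s) => // u y.
  by rewrite inE => /eqP-> /far_a; apply: path_nbhd_far.
- apply/hasP; exists a; first by rewrite mem_iota; lia.
  rewrite nbhd_ba /= path_nbhd_self a_notin; apply/allP => u /s_in.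
  by rewrite mem_iota => u_in; apply: path_nbhd_far; have := far_a u; lia.
Qed.

Definition legal_arrangement lo hi s :=
  perm_eq s (iota lo (hi - lo)) && legal_from lo hi [::] s.

Lemma legal_arrangement_nil lo : legal_arrangement lo lo [::].
Proof. by rewrite /legal_arrangement subnn. Qed.

Lemma legal_arrangement_single lo : c lo -> legal_arrangement lo lo.+1 [:: lo].
Proof.
move=> lo_in; rewrite /legal_arrangement subSnn perm_refl /= andbT.
by rewrite /has_footprint subSnn /= path_nbhd_self lo_in.
Qed.

Lemma legal_arrangement_wrapl lo hi s : lo.+2 <= hi -> ~~ c lo ->
  legal_arrangement lo.+2 hi s -> legal_arrangement lo hi (lo :: s ++ [:: lo.+1]).
Proof.
move=> le_hi lo_notin /andP[perm_s legal_s]; apply/andP; split.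
  have -> : hi - lo = (hi - lo.+2).+2 by lia.
  by rewrite /= perm_cons perm_catC /= perm_cons.
apply: legal_from_wrap legal_s => //; try lia.
by move=> y; rewrite -(perm_mem perm_s).
Qed.

Lemma legal_arrangement_wrapr lo m s : lo <= m -> ~~ c m.+1 ->
  legal_arrangement lo m s -> legal_arrangement lo m.+2 (m.+1 :: s ++ [:: m]).
Proof.
move=> le_lo m_notin /andP[perm_s legal_s]; apply/andP; split.
  have -> : m.+2 - lo = (m - lo) + 2 by lia.
  by rewrite iotaD subnKC //= cats1 -cat1s perm_catC cat_rcons perm_cat2r.
apply: legal_from_wrap legal_s => //; try lia.
by move=> y; rewrite -(perm_mem perm_s).
Qed.

Lemma legal_arrangement_of_goodn l lo : goodn l -> l = iota lo (size l) ->
  exists s, legal_arrangement lo (lo + size l) s.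
Proof.
move=> good_l; elim: good_l lo => {l}
  [a a_in|a b ab|a b t _ a_notin _ IH|t a b _ b_notin _ IH] lo /=.
- case=> a_lo; subst a; exists [:: lo]; rewrite addn1.
  exact: legal_arrangement_single.
- case=> a_lo b_lo; subst a b; rewrite addn2; case/nandP: ab => [a_notin|b_notin].
    exists (lo :: [::] ++ [:: lo.+1]).
    by apply: legal_arrangement_wrapl => //; apply: legal_arrangement_nil.
  exists (lo.+1 :: [::] ++ [:: lo]).
  by apply: legal_arrangement_wrapr => //; apply: legal_arrangement_nil.
- case=> a_lo _ /IH[s legal_s]; subst a; exists (lo :: s ++ [:: lo.+1]).
  have -> : lo + (size t).+2 = lo.+2 + size t by lia.
  by apply: legal_arrangement_wrapl => //; lia.
- rewrite size_cat addn2 -addn2 iotaD => /eqP; rewrite eqseq_cat ?size_iota //.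
  case/andP=> /eqP/IH[s legal_s] /eqP[a_eq b_eq]; subst a b.
  exists ((lo + size t).+1 :: s ++ [:: lo + size t]).
  have -> : lo + (size t + 2) = (lo + size t).+2 by lia.
  by apply: legal_arrangement_wrapr => //; lia.
Qed.

End PathNeighbourhood.

Section FootprintPermutation.
(* [pos v] is the position of v in a legal sequence listing the vertices
   [0, n), and [f v] is a vertex footprinted by v. *)
Variables (c : nat -> bool) (n : nat) (f pos : nat -> nat).
Hypothesis f_lt : forall v, v < n -> f v < n.
Hypothesis nbhd_f : forall v, v < n -> path_nbhd c v (f v).
Hypothesis pos_inj : forall u v, u < n -> v < n -> pos u = pos v -> u = v.
Hypothesis f_undominated :
  forall u v, u < n -> v < n -> pos u < pos v -> ~~ path_nbhd c u (f v).

Lemma pos_lt_of_nbhd u v : u < n -> v < n -> u != v ->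
  path_nbhd c u (f v) -> pos v < pos u.
Proof.
move=> u_lt v_lt neq_uv nbhd_u; case: ltngtP => // [lt_uv|eq_pos].
  by rewrite (negbTE (f_undominated u_lt v_lt lt_uv)) in nbhd_u.
by rewrite (pos_inj v_lt u_lt eq_pos) eqxx in neq_uv.
Qed.

Lemma f_inj u v : u < n -> v < n -> f u = f v -> u = v.
Proof.
move=> u_lt v_lt fuv; case: (eqVneq u v) => // neq_uv.
have := pos_lt_of_nbhd u_lt v_lt neq_uv; rewrite -fuv nbhd_f // => /(_ isT).
have := pos_lt_of_nbhd v_lt u_lt (contra_neq esym neq_uv).
by rewrite fuv nbhd_f // => /(_ isT); lia.
Qed.

Lemma f_onto x : x < n -> exists2 v, v < n & f v = x.
Proof.
move=> x_lt; have uniq_f : uniq (map f (iota 0 n)).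
  by rewrite map_inj_in_uniq ?iota_uniq // => u v; rewrite !mem_iota; apply: f_inj.
have sub_f : {subset map f (iota 0 n) <= iota 0 n}.
  by move=> y /mapP[v]; rewrite !mem_iota => v_lt ->; rewrite f_lt.
have [_ eq_f] := uniq_min_size uniq_f sub_f (eq_leq (esym (size_map _ _))).
have /mapP[v] : x \in map f (iota 0 n) by rewrite eq_f mem_iota.
by rewrite mem_iota => v_lt ->; exists v.
Qed.

Lemma f_swap_succ v : v.+1 < n -> f v = v.+1 -> f v.+1 = v.
Proof.
(* some w is mapped onto v; w = v is excluded, and w = v.-1 by induction *)
elim: v => [|v IH] lt_v fv; have [w w_lt fw] := f_onto (ltnW lt_v);
  have := nbhd_f w_lt; rewrite fw => /path_nbhdP[v_w|w_v|[w_v _]];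
  try lia; try (subst w; lia).
have w_v : w = v by lia.
by subst w; have := IH (ltnW lt_v) fw; lia.
Qed.

Lemma f_swap_pred v : v.+1 < n -> f v.+1 = v -> f v = v.+1.
Proof.
(* f v = v and, by induction, f v = v.-1 would contradict injectivity *)
elim: v => [|v IH] lt_v fv;
  have /path_nbhdP[//|v_fv|[fv_v _]] := nbhd_f (ltnW lt_v); try lia.
- by have := f_inj (ltnW lt_v) lt_v (etrans (esym fv_v) (esym fv)).
- have fv' : f v = v.+1 by apply: IH; lia.
  by have := f_inj (ltnW (ltnW lt_v)) lt_v (etrans fv' (esym fv)); lia.
- by have := f_inj (ltnW lt_v) lt_v (etrans (esym fv_v) (esym fv)); lia.
Qed.

(* [a] ends a block of f that is a fixed point or a swapped pair whose right
   vertex comes first. *)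
Definition right_first a := f a = a \/ [/\ 0 < a, f a = a.-1 & pos a < pos a.-1].

Lemma right_first_next a : a.+1 < n -> right_first a ->
  f a.+1 = a.+2 /\ pos a.+2 < pos a.+1.
Proof.
move=> lt_a1 ra; have lt_a := ltnW lt_a1.
have [w [w_lt fw le_w pos_w]] : exists w, [/\ w < n, f w = a, w <= a & pos a <= pos w].
  case: ra => [fa|[a_gt0 fa pos_a]]; first by exists a.
  case: a a_gt0 lt_a1 lt_a fa pos_a => // b _ lt_b _ /= fb pos_b.
  by exists b; split; try lia; apply: f_swap_pred fb; lia.
have pos_a_a1 : pos a < pos a.+1.
  suff : pos w < pos a.+1 by lia.
  by apply: pos_lt_of_nbhd => //; [lia | rewrite fw path_nbhd_pred].
have fa1 : f a.+1 = a.+2.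
  have /path_nbhdP[//|fa1|[fa1 _]] := nbhd_f lt_a1.
    by have := f_inj lt_a1 w_lt; lia.
  by have := f_undominated lt_a lt_a1 pos_a_a1; rewrite -fa1 path_nbhd_succ.
have lt_a2 : a.+2 < n by rewrite -fa1 f_lt.
split=> //; suff : pos a.+2 < pos a by lia.
apply: pos_lt_of_nbhd => //; first lia.
by rewrite f_swap_succ // path_nbhd_succ.
Qed.

Lemma right_first_last a b : right_first a -> a < b -> b < n -> f b != b.+1 ->
  [/\ a.+1 < b, f b = b.-1 & pos b < pos b.-1].
Proof.
move=> ra lt_ab; have [k -> k_gt0] : exists2 k, b = a + k & 0 < k by exists (b - a); lia.
elim/ltn_ind: k a k_gt0 ra {lt_ab} => k IH a k_gt0 ra lt_ak not_succ.
have [|fa1 pos_a1] := right_first_next _ ra; first lia.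
have fa2 : f a.+2 = a.+1 by apply: f_swap_succ => //; rewrite -fa1 f_lt //; lia.
have ra2 : right_first a.+2 by right.
case: k IH lt_ak k_gt0 not_succ => [|[|[|k]]] IH lt_ak // _ not_succ.
- by rewrite addn1 fa1 eqxx in not_succ.
- by rewrite addn2; split.
have shift : a + k.+3 = a.+2 + k.+1 by lia.
rewrite shift in lt_ak not_succ *.
have [|_ fb pos_b] := IH k.+1 _ a.+2 isT ra2 lt_ak not_succ; first lia.
by split=> //; lia.
Qed.

Lemma notin_C_left_first v : v.+1 < n -> f v = v.+1 -> pos v < pos v.+1 -> ~~ c v.
Proof.
move=> lt_v fv pos_v; rewrite -path_nbhd_self -{2}(f_swap_succ lt_v fv).
exact: f_undominated (ltnW lt_v) lt_v pos_v.
Qed.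

Lemma notin_C_right_first v : v.+1 < n -> f v.+1 = v -> pos v.+1 < pos v -> ~~ c v.+1.
Proof.
move=> lt_v fv pos_v; rewrite -path_nbhd_self -{2}(f_swap_pred lt_v fv).
exact: f_undominated lt_v (ltnW lt_v) pos_v.
Qed.

Definition invariant_interval lo k := forall v, lo <= v < lo + k -> lo <= f v < lo + k.

Lemma invariant_interval_behead lo k : lo + k.+2 <= n -> invariant_interval lo k.+2 ->
  f lo = lo.+1 -> invariant_interval lo.+2 k.
Proof.
move=> le_n inv flo v v_in; have v_lt : v < n by lia.
have f_neq : f v != f lo by apply/eqP => /f_inj; lia.
by have := inv v; case/path_nbhdP: (nbhd_f v_lt) => [||[]]; lia.
Qed.

Lemma invariant_interval_belast lo k : lo + k.+2 <= n -> invariant_interval lo k.+2 ->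
  f (lo + k.+1) = lo + k -> invariant_interval lo k.
Proof.
move=> le_n inv flast v v_in; have v_lt : v < n by lia.
have f_neq : f v != f (lo + k.+1) by apply/eqP => /f_inj; lia.
by have := inv v; case/path_nbhdP: (nbhd_f v_lt) => [||[]]; lia.
Qed.

Lemma goodn_invariant_interval k lo : 0 < k -> lo + k <= n -> invariant_interval lo k ->
  goodn c (iota lo k).
Proof.
elim/ltn_ind: k lo => k IH lo k_gt0 le_n inv; have lo_lt : lo < n by lia.
have peel_right e : right_first e -> lo <= e -> e.+1 < lo + k -> goodn c (iota lo k).
  move=> re le_e lt_e; have [k' k_eq] : exists k', k = k'.+2 by exists k.-2; lia.
  subst k; have lt_last : (lo + k').+1 < n by lia.
  have lt_e_last : e < (lo + k').+1 by lia.
  have not_succ : f (lo + k').+1 != (lo + k').+2 by have := inv (lo + k').+1; lia.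
  have [lt_k' flast pos_last] := right_first_last re lt_e_last lt_last not_succ.
  rewrite -addn2 iotaD; apply: goodnR; rewrite ?size_iota; first lia.
    exact: notin_C_right_first.
  by apply: IH; try lia; apply: invariant_interval_belast le_n inv _; rewrite addnS.
case/path_nbhdP: (nbhd_f lo_lt) => [flo | flo | [lo_flo lo_in]];
  [ | by have := inv lo; lia | ]; last first.
  case: (ltnP lo.+1 (lo + k)) => [lt_lo|le_k].
    by apply: (peel_right lo) => //; left.
  by rewrite (_ : k = 1); [apply: goodn1 | lia].
have lt_lo1 : lo.+1 < n by have := inv lo; lia.
have flo1 := f_swap_succ lt_lo1 flo.
case: (ltngtP (pos lo) (pos lo.+1)) => [pos_lo|pos_lo|/(pos_inj lo_lt lt_lo1)]; last lia.
- have lo_notin := notin_C_left_first lt_lo1 flo pos_lo.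
  case: k IH k_gt0 le_n inv peel_right => [|[|[|k]]] IH k_gt0 le_n inv _;
    try (by have := inv lo; lia).
    by apply: goodn2; rewrite (negbTE lo_notin).
  apply: (@goodnL c lo lo.+1 (iota lo.+2 k.+1)) => //; apply: IH; try lia.
  exact: invariant_interval_behead.
- case: (ltnP lo.+2 (lo + k)) => [lt_lo2|le_k].
    by apply: (peel_right lo.+1) => //; right; split.
  have -> : k = 2 by have := inv lo; lia.
  by apply: goodn2; rewrite (negbTE (notin_C_right_first lt_lo1 flo1 pos_lo)) andbF.
Qed.

Lemma goodn_iota : 0 < n -> goodn c (iota 0 n).
Proof. by move=> n_gt0; apply: goodn_invariant_interval => // v /andP[_ /f_lt]. Qed.

End FootprintPermutation.

Lemma goodn_of_footprints c n l : 0 < n -> perm_eq l (iota 0 n) ->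
  (forall v, v < n -> has_footprint c 0 n (take (index v l) l) v) -> goodn c (iota 0 n).
Proof.
move=> n_gt0 perm_l footprint_l.
have l_mem v : (v \in l) = (v < n) by rewrite (perm_mem perm_l) mem_iota.
pose fresh v y := path_nbhd c v y && undominated c (take (index v l) l) y.
pose f v := nth 0 (iota 0 n) (find (fresh v) (iota 0 n)).
have has_fresh v : v < n -> has (fresh v) (iota 0 n).
  by move/footprint_l; rewrite /has_footprint subn0.
have f_fresh v : v < n -> fresh v (f v) by move/has_fresh/(nth_find 0).
have f_lt v : v < n -> f v < n.
  by move/has_fresh; rewrite has_find size_iota => lt_find; rewrite /f nth_iota.
apply: (goodn_iota (f := f) (pos := index^~ l)) => //
  [v /f_fresh/andP[] //|u v u_lt v_lt|u v u_lt v_lt lt_uv].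
  by apply: index_inj; rewrite ?l_mem.
by have /f_fresh/andP[_ /allP] := v_lt; apply; rewrite in_take ?l_mem.
Qed.

Section GrundyBounds.
Variables (T : finType) (adj : rel T) (C : {set T}).

Lemma size_legal s : legal adj C s -> size s <= #|T|.
Proof. by case/andP=> uniq_s _; rewrite -(card_uniqP uniq_s) max_card. Qed.

Lemma gamma_gr_ge s : legal adj C s -> dominating adj C s -> size s <= gamma_gr adj C.
Proof.
move=> legal_s dom_s; have lt_s : size s < #|T|.+1 by rewrite ltnS size_legal.
apply: (@leq_bigmax_cond _ _ _ (Ordinal lt_s)); apply/existsP.
by exists (in_tuple s); rewrite legal_s.
Qed.

Lemma gamma_gr_le k : (forall s, legal adj C s -> dominating adj C s -> size s <= k) ->
  gamma_gr adj C <= k.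
Proof.
move=> le_k; apply/bigmax_leqP => i /existsP[t /andP[legal_t dom_t]].
by rewrite -(size_tuple t) le_k.
Qed.

Lemma dominatingP s :
  reflect (forall x, exists2 u, u \in s & x \in Nang adj C u) (dominating adj C s).
Proof.
apply: (iffP eqP) => [dom_s x | dom_s]; last first.
  by apply/setP => x; rewrite inE bigcup_seq; apply/bigcupP.
by have := in_setT x; rewrite -dom_s bigcup_seq => /bigcupP.
Qed.

Lemma dominating_of_full s : symmetric adj ->
  (forall v, v \notin C -> exists u, adj v u) -> (forall v, v \in s) -> dominating adj C s.
Proof.
move=> adj_sym no_isolated s_full; apply/dominatingP => x.
case: (boolP (x \in C)) => [xC | /no_isolated[u adj_xu]].
  by exists x; rewrite // /Nang xC /Nclosed setU11.
by exists u; rewrite // /Nang /Nclosed; case: ifP; rewrite ?inE adj_sym adj_xu ?orbT.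
Qed.

End GrundyBounds.

Section PathBridge.
Variables (n : nat) (C : {set 'I_n}).
Local Notation adj := (@path_adj n).

Definition inC (i : nat) : bool := i \in [seq val v | v in C].

Lemma inC_val (v : 'I_n) : inC (val v) = (v \in C).
Proof. by rewrite /inC mem_map ?mem_enum //; apply: val_inj. Qed.

Lemma mem_Nang (v x : 'I_n) : (x \in Nang adj C v) = path_nbhd inC v x.
Proof.
rewrite /Nang /Nclosed /Nopen /path_nbhd inC_val.
case: (v \in C); rewrite !inE /path_adj ?andbT ?andbF ?orbF //.
by rewrite -val_eqE [val x == _]eq_sym orbC.
Qed.

Lemma good_goodn (s : seq 'I_n) : good C s <-> goodn inC (map val s).
Proof.
split.
  elim=> {s} [a|a b|a b t|t a b] /=; rewrite -?inC_val.
  - exact: goodn1.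
  - exact: goodn2.
  - by move=> t_gt0 a_notin _; apply: goodnL; rewrite ?size_map.
  - by move=> t_gt0 b_notin _; rewrite map_cat; apply: goodnR; rewrite ?size_map.
have [l val_s] : exists l, map val s = l by exists (map val s).
rewrite val_s => good_l; elim: good_l s val_s => {l}
  [a a_in|a b ab|a b t t_gt0 a_notin _ IH|t a b t_gt0 b_notin _ IH] s val_s.
- by case: s val_s => [|x []] //= [xa]; apply: good1; rewrite -inC_val /= xa.
- by case: s val_s => [|x [|y []]] //= [xa yb]; apply: good2; rewrite -!inC_val /= xa yb.
- case: s val_s => [|x [|y s]] //= [xa _ val_s]; apply: goodL; last exact: IH.
    by rewrite -(size_map val) val_s.
  by rewrite -inC_val /= xa.
rewrite -(cat_take_drop (size t) s).
have val_take : map val (take (size t) s) = t by rewrite map_take val_s take_size_cat.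
have : map val (drop (size t) s) = [:: a; b] by rewrite map_drop val_s drop_size_cat.
case: (drop _ s) => [|x [|y []]] //= [_ yb]; apply: goodR; last exact: IH.
  by rewrite -(size_map val) val_take.
by rewrite -inC_val /= yb.
Qed.


Lemma footprint_step (s : seq 'I_n) i x0 : i < size s ->
  ~~ (Nang adj C (nth x0 s i) \subset \bigcup_(u <- take i s) Nang adj C u) =
  has_footprint inC 0 n (take i (map val s)) (nth 0 (map val s) i).
Proof.
move=> lt_i; rewrite (nth_map x0) // -map_take /has_footprint subn0.
apply/subsetPn/hasP => [[x x_in x_notin] | [y y_in /andP[nbhd_y fresh_y]]].
  exists (val x); first by rewrite mem_iota /= ltn_ord.
  rewrite -mem_Nang x_in /=; apply/allP => _ /mapP[u u_in ->]; rewrite -mem_Nang.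
  by apply: contra x_notin => x_u; rewrite bigcup_seq; apply/bigcupP; exists u.
have y_lt : y < n by rewrite mem_iota in y_in.
exists (Ordinal y_lt); first by rewrite mem_Nang.
rewrite bigcup_seq; apply/bigcupP => -[u u_in]; rewrite mem_Nang.
by apply/negP; move/allP: fresh_y; apply; apply: map_f.
Qed.

Lemma legal_of_legal_from (s : seq 'I_n) :
  uniq s -> legal_from inC 0 n [::] (map val s) -> legal adj C s.
Proof.
move=> uniq_s legal_s; rewrite /legal uniq_s; apply/forallP => i; apply/implyP => _.
rewrite (tnth_nth (tnth (in_tuple s) i)) footprint_step //.
by apply: (legal_from_nth legal_s); rewrite size_map.
Qed.

Lemma has_footprint_of_legal (s : seq 'I_n) i : legal adj C s -> 0 < i < size s ->
  has_footprint inC 0 n (take i (map val s)) (nth 0 (map val s) i).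
Proof.
case/andP=> _ /forallP legal_s /andP[i_gt0 lt_i].
have := legal_s (Ordinal lt_i); rewrite i_gt0 (tnth_nth (tnth (in_tuple s) (Ordinal lt_i))).
by rewrite footprint_step.
Qed.

Lemma val_pmap_insub (l : seq nat) :
  all (fun v => v < n) l -> map val (pmap insub l : seq 'I_n) = l.
Proof.
move=> l_lt; rewrite (pmap_filter (@insubK _ _ _)) (eq_filter (@isSome_insub _ _ _)).
exact/all_filterP.
Qed.

Lemma legal_full_of_good : good C (enum 'I_n) ->
  exists s : seq 'I_n, [/\ size s = n, legal adj C s & forall v, v \in s].
Proof.
move=> /good_goodn; rewrite val_enum_ord => good_n.
have [|l /andP[perm_l legal_l]] := legal_arrangement_of_goodn (lo := 0) good_n.
  by rewrite size_iota.
rewrite size_iota add0n subn0 in perm_l legal_l.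
have val_s : map val (pmap insub l : seq 'I_n) = l.
  by apply: val_pmap_insub; apply/allP => v; rewrite (perm_mem perm_l) mem_iota.
exists (pmap insub l); split.
- by rewrite -(size_map val) val_s (perm_size perm_l) size_iota.
- apply: legal_of_legal_from; last by rewrite val_s.
  by rewrite -(map_inj_uniq val_inj) val_s (perm_uniq perm_l) iota_uniq.
- by move=> v; rewrite -(mem_map val_inj) val_s (perm_mem perm_l) mem_iota /=.
Qed.

Lemma legal_dominating_prefix : 1 < n -> 2 < n \/ inC 0 ->
  exists s : seq 'I_n, [/\ size s = n.-1, legal adj C s & dominating adj C s].
Proof.
move=> n_gt1 first_dominated.
have val_s : map val (pmap insub (iota 0 n.-1) : seq 'I_n) = iota 0 n.-1.
  by apply: val_pmap_insub; apply/allP => v; rewrite mem_iota; lia.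
have mem_s (v : 'I_n) : v < n.-1 -> v \in pmap insub (iota 0 n.-1).
  by move=> lt_v; rewrite -(mem_map val_inj) val_s mem_iota.
exists (pmap insub (iota 0 n.-1)); split.
- by rewrite -(size_map val) val_s size_iota.
- apply: legal_of_legal_from; last by rewrite val_s; apply: (@legal_from_iota inC n 0); lia.
  by rewrite -(map_inj_uniq val_inj) val_s iota_uniq.
apply/dominatingP => -[[|k] lt_k].
  case: first_dominated => [n_gt2 | C0].
    by exists (Ordinal n_gt1); [apply: mem_s => /=; lia | rewrite mem_Nang /= path_nbhd_pred].
  by exists (Ordinal (ltnW n_gt1)); [apply: mem_s => /=; lia | rewrite mem_Nang path_nbhd_self].
by exists (Ordinal (ltnW lt_k)); [apply: mem_s => /=; lia | rewrite mem_Nang path_nbhd_succ].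
Qed.

Hypothesis n_gt0 : 0 < n.
Hypothesis no_isolated : forall v : 'I_n, v \notin C -> exists u, adj v u.

Lemma has_footprint_nil (v : 'I_n) : has_footprint inC 0 n [::] v.
Proof.
rewrite /has_footprint subn0; apply/hasP.
case: (boolP (v \in C)) => [vC | /no_isolated[u adj_vu]].
  by exists (val v); rewrite ?mem_iota //= path_nbhd_self inC_val vC.
exists (val u); rewrite ?mem_iota //= andbT -mem_Nang /Nang /Nclosed.
by case: ifP; rewrite ?inE adj_vu ?orbT.
Qed.

Lemma good_of_legal (s : seq 'I_n) : legal adj C s -> n <= size s -> good C (enum 'I_n).
Proof.
move=> legal_s le_n; apply/good_goodn; rewrite val_enum_ord.
have uniq_l : uniq (map val s) by rewrite (map_inj_uniq val_inj); case/andP: legal_s.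
have sub_l : {subset map val s <= iota 0 n}.
  by move=> _ /mapP[v _ ->]; rewrite mem_iota /= ltn_ord.
have [|_ eq_l] := uniq_min_size uniq_l sub_l; first by rewrite size_iota size_map.
have perm_l : perm_eq (map val s) (iota 0 n) by apply: uniq_perm; rewrite ?iota_uniq.
apply: (goodn_of_footprints n_gt0 perm_l) => v v_lt.
have v_in : v \in map val s by rewrite eq_l mem_iota.
case: (posnP (index v (map val s))) => [-> | i_gt0].
  by rewrite take0; apply: (has_footprint_nil (Ordinal v_lt)).
rewrite -{2}(nth_index 0 v_in); apply: has_footprint_of_legal => //.
by rewrite i_gt0 -(size_map val) index_mem.
Qed.

Lemma not_good_cases : ~ good C (enum 'I_n) -> 1 < n /\ (2 < n \/ inC 0).
Proof.
move=> not_good; have n_gt1 : 1 < n.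
  rewrite ltnNge; apply/negP => le_n1; apply: not_good.
  apply/good_goodn; rewrite val_enum_ord (_ : iota 0 n = [:: 0]); last first.
    by rewrite (_ : n = 1) //; lia.
  apply: goodn1; rewrite -[0]/(val (Ordinal n_gt0)) inC_val.
  by apply/negPn/negP => /no_isolated[u]; rewrite /path_adj /=; have := ltn_ord u; lia.
split=> //; case: (ltnP 2 n) => [|le_n2]; [by left | right].
apply/negPn/negP => C0_notin; apply: not_good.
apply/good_goodn; rewrite val_enum_ord (_ : iota 0 n = [:: 0; 1]); last first.
  by rewrite (_ : n = 2) //; lia.
by apply: goodn2; rewrite (negbTE C0_notin).
Qed.

End PathBridge.

Theorem corollary2 (n : nat) (hn : 0 < n) (C : {set 'I_n})
  (hC : forall v : 'I_n, v \notin C -> exists u : 'I_n, path_adj v u) :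
  (good C (enum 'I_n) -> gamma_gr (@path_adj n) C = n) /\
  (~ good C (enum 'I_n) -> gamma_gr (@path_adj n) C = n.-1).
Proof.
have gamma_le_n : gamma_gr (@path_adj n) C <= n.
  by apply: gamma_gr_le => s legal_s _; have := size_legal legal_s; rewrite card_ord.
split=> [good_C | not_good].
  have [s [size_s legal_s full_s]] := legal_full_of_good good_C.
  apply/eqP; rewrite eqn_leq gamma_le_n -{1}size_s gamma_gr_ge //.
  by apply: dominating_of_full => // u v; rewrite /path_adj orbC.
have [n_gt1 first_dominated] := not_good_cases hn hC not_good.
have [s [size_s legal_s dom_s]] := legal_dominating_prefix n_gt1 first_dominated.
apply/eqP; rewrite eqn_leq -{2}size_s gamma_gr_ge // andbT.
apply: gamma_gr_le => t legal_t _; rewrite leqNgt; apply/negP => lt_t.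
by apply: not_good; apply: (good_of_legal hn hC legal_t); rewrite prednK in lt_t.
Qed.
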